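(* Let $m\ge2$ and $G=CK(2m-1)$. If $B$ is a set of edges of $G$ having an edge in common with every simple Hamiltonian path of $G$, then $|B|\ge m$.
   Context: $CK(2m-1)$ is the complete convex geometric graph on $2m-1$ points in convex position in the plane, labelled cyclically $0,\dots,2m-2$ (elements of $\mathbb{Z}_{2m-1}$), with all segments between vertices as edges. A simple Hamiltonian path is a path through all vertices whose edges pairwise do not cross. *)

From mathcomp Require Import all_boot.
Set Implicit Arguments. Unset Strict Implicit. Unset Printing Implicit Defensive.

(* Vertices of CK(n): 'I_n, labelled 0..n-1 in cyclic (convex) order.
   An edge (segment) is a 2-element subset of the vertices. *)
Definition is_edge (n : nat) (e : {set 'I_n}) : bool := #|e| == 2.

(* Two segments cross (in their relative interiors) iff their four endpoints
   are distinct and interleave in the cyclic order; with labels 0..n-1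
   around the convex polygon this means a < c < b < d for some labelling. *)
Definition cross (n : nat) (e f : {set 'I_n}) : Prop :=
  exists a b c d : 'I_n,
    [/\ e = [set a; b], f = [set c; d] & (a < c < b)%N && (b < d)%N].

Definition ham_path (n : nat) (s : seq 'I_n) : bool := perm_eq s (enum 'I_n).

Definition path_edges (n : nat) (s : seq 'I_n) : seq {set 'I_n} :=
  [seq [set p.1; p.2] | p <- zip s (behead s)].

Definition simple_ham_path (n : nat) (s : seq 'I_n) : Prop :=
  ham_path s /\
  (forall e f, e \in path_edges s -> f \in path_edges s -> ~ cross e f).

(** Classify the chords of the convex (2m-1)-gon by the sum of their
endpoints modulo 2m-1: chords of one class are parallel.  Two crossing
chords have sums differing by 2, ..., 2m-3, so chords from two cyclically
consecutive classes never cross.  For each vertex v, the zigzag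
v, v+1, v-1, v+2, v-2, ... is therefore a simple Hamiltonian path, and all
its edges lie in the classes 2v and 2v+1.  A blocking set must thus meet
class 2v or class 2v+1 for every v; since 2m-1 is odd, v |-> 2v and
v |-> 2v+1 are bijections, so the blocking set meets at least m classes. *)

From mathcomp Require Import all_boot all_algebra zify ring.
Set Implicit Arguments. Unset Strict Implicit. Unset Printing Implicit Defensive.

Import GRing.Theory.

Lemma card_le_double_of_injective_cover (T : finType) (f g : T -> T)
    (S : {set T}) :
  injective f -> injective g -> (forall x, (f x \in S) || (g x \in S)) ->
  #|T| <= 2 * #|S|.
Proof.
move=> f_inj g_inj cover.
have preimsU : (f @^-1: S) :|: (g @^-1: S) = setT.
  by apply/setP => x; rewrite !inE cover.
rewrite -cardsT -preimsU.
by rewrite (leq_trans (leq_card_setU _ _)) // !card_preimset // addnn mul2n.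
Qed.

Lemma path_edges_map_iota (n : nat) (f : nat -> 'I_n) (i k : nat) :
  path_edges [seq f j | j <- iota i k.+1] =
  [seq [set f j; f j.+1] | j <- iota i k].
Proof. by elim: k i => [|k IHk] i //; rewrite /= -IHk. Qed.

Section ConvexPolygon.

Variable n : nat.
Local Notation N := n.+2.
Local Open Scope ring_scope.

Implicit Types (a b c d v : 'I_N) (e f : {set 'I_N}).

Lemma natr_Zp_inj (i j : nat) :
  (i%:R : 'I_N) = j%:R -> (i < N)%N -> (j < N)%N -> i = j.
Proof.
move=> /(congr1 val) + ltiN ltjN.
by rewrite !Zp_nat /= !modn_small.
Qed.

Definition chord_class e : 'I_N := \sum_(x in e) x.

Lemma chord_class2 a b : a != b -> chord_class [set a; b] = a + b.
Proof. by move=> neq_ab; rewrite /chord_class big_setU1 ?big_set1 ?inE. Qed.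

Lemma cross_chord_class e f : cross e f ->
  exists2 k, (2 <= k <= N - 2)%N & chord_class f = chord_class e + k%:R.
Proof.
move=> [a [b [c [d [-> -> /andP[/andP[ltac ltcb] ltbd]]]]]].
have ltdN := ltn_ord d.
set k := (c - a + (d - b))%N.
have sum_cd : (c + d = a + b + k)%N by rewrite /k; lia.
exists k; first by rewrite /k; lia.
rewrite !chord_class2 -?val_eqE /=; try lia.
by rewrite -[a]natr_Zp -[b]natr_Zp -[c]natr_Zp -[d]natr_Zp -!natrD sum_cd.
Qed.

Lemma consecutive_classes_no_cross (s : 'I_N) e f :
  (exists2 i, (i <= 1)%N & chord_class e = s + i%:R) ->
  (exists2 j, (j <= 1)%N & chord_class f = s + j%:R) ->
  ~ cross e f.
Proof.
move=> [i lei1 cle] [j lej1 clf] /cross_chord_class [k /andP[lek2 lekN]].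
by rewrite cle clf -addrA -natrD => /addrI /natr_Zp_inj; lia.
Qed.

Definition zigzag_vertex v (k : nat) : 'I_N :=
  if odd k then v + (uphalf k)%:R else v - (k./2)%:R.

Definition zigzag v : seq 'I_N := [seq zigzag_vertex v k | k <- iota 0 N].

Lemma zigzag_vertexS v k :
  zigzag_vertex v k + zigzag_vertex v k.+1 = v + v + (~~ odd k)%:R.
Proof.
rewrite /zigzag_vertex /= uphalfE.
by case: (odd k) => /=; rewrite ?addr0; ring.
Qed.

Lemma zigzag_vertex_inj v k k' : (k < N)%N -> (k' < N)%N ->
  zigzag_vertex v k = zigzag_vertex v k' -> k = k'.
Proof.
wlog le_oddk : k k' / (odd k' <= odd k)%N.
  move=> wlog_le ltkN ltk'N eqz.
  have [le|/ltnW le] := leqP (odd k') (odd k); first exact: wlog_le.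
  exact: esym (wlog_le k' k le ltk'N ltkN (esym eqz)).
rewrite /zigzag_vertex => ltkN ltk'N.
case kodd: (odd k) le_oddk; case k'odd: (odd k') => //= _.
- by move/addrI/natr_Zp_inj; lia.
- move=> /addrI/eqP; rewrite -addr_eq0 -natrD -[0]/(0%:R).
  by move=> /eqP/natr_Zp_inj; lia.
- by move/addrI/oppr_inj/natr_Zp_inj; lia.
Qed.

Lemma zigzag_ham_path v : ham_path (zigzag v).
Proof.
have uniq_z : uniq (zigzag v).
  rewrite map_inj_in_uniq ?iota_uniq // => k k'.
  rewrite !mem_iota /= => ltkN ltk'N; exact: zigzag_vertex_inj.
apply: (uniq_perm uniq_z (enum_uniq _)).
apply: (uniq_min_size uniq_z _ _).2 => [x|]; first by rewrite mem_enum.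
by rewrite size_enum_ord size_map size_iota.
Qed.

Lemma zigzag_edge_class v e : e \in path_edges (zigzag v) ->
  exists2 i, (i <= 1)%N & chord_class e = v + v + i%:R.
Proof.
rewrite /zigzag path_edges_map_iota => /mapP [k]; rewrite mem_iota /= => ltk ->.
exists (~~ odd k : nat); first by case: (odd k).
rewrite chord_class2 ?zigzag_vertexS //.
by apply/eqP => /zigzag_vertex_inj; lia.
Qed.

Lemma zigzag_simple v : simple_ham_path (zigzag v).
Proof.
split; first exact: zigzag_ham_path.
move=> e f /zigzag_edge_class cle /zigzag_edge_class clf.
exact: consecutive_classes_no_cross cle clf.
Qed.

Lemma double_inj : odd N -> injective (fun v : 'I_N => v + v).
Proof.
move=> oddN v w /=; rewrite -mulr2n -[w + w]mulr2n -mulr_natl -[w *+ 2]mulr_natl.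
by apply: mulrI; rewrite (@unitZpE N) // coprimen2.
Qed.

Lemma blocking_set_card (B : {set {set 'I_N}}) : odd N ->
  (forall s, simple_ham_path s -> exists2 e, e \in B & e \in path_edges s) ->
  (N <= 2 * #|B|)%N.
Proof.
move=> oddN blocking.
apply: (leq_trans _ (leq_mul (leqnn 2) (leq_imset_card chord_class B))).
rewrite -[X in (X <= _)%N]card_ord.
apply: (@card_le_double_of_injective_cover _ _ (fun v => v + v + 1)).
- exact: double_inj.
- by move=> v w /addIr /(double_inj oddN).
move=> v /=; have [e eB /zigzag_edge_class [i lei1 cle]] := blocking _ (zigzag_simple v).
move: (imset_f chord_class eB); rewrite cle.
by case: i lei1 {cle} => [|[|//]] _; rewrite ?addr0 => ->; rewrite ?orbT.
Qed.

End ConvexPolygon.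

Theorem proposition1 (m : nat) (hm : (2 <= m)%N)
  (B : {set {set 'I_(2 * m - 1)}}) :
  (forall e, e \in B -> is_edge e) ->
  (forall s : seq 'I_(2 * m - 1), simple_ham_path s ->
     exists2 e, e \in B & e \in path_edges s) ->
  (m <= #|B|)%N.
Proof.
move=> _; move: B.
have : odd (2 * m - 1) by rewrite oddB ?odd_double //; lia.
case N_def : (2 * m - 1) => [|[|n]] oddN B blocking; try lia.
by have := blocking_set_card oddN blocking; lia.
Qed.
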